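(* Let $X$ be a compact metric space, $G:X\to\mathcal{K}(X)$ a measurable set-valued map, $f\in C(X,\mathbb{R})$ and $\mathcal{U}$ a finite open cover of $X$. Then $$F:x\mapsto\inf\Big\{\sum_{V\in\mathcal{V}}\sup_{y\in V\cap G(x)}f(y):\ \mathcal{V}\in\mathcal{C}_X,\ \mathcal{V}\succeq\mathcal{U}\Big\}$$ is a Borel measurable map.
   Context: $\mathcal{K}(X)$ is the family of nonempty closed subsets of $X$ with the Hausdorff metric; $G$ is measurable if $\{x: G(x)\cap V\neq\emptyset\}$ is Borel for every closed (equivalently, open) $V\subseteq X$. $\mathcal{C}_X$ is the set of finite covers of $X$ by Borel sets; $\mathcal{V}\succeq\mathcal{U}$ means each element of $\mathcal{V}$ lies in some element of $\mathcal{U}$. Terms with $V\cap G(x)=\emptyset$ are omitted. *)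

From HB Require Import structures.
From mathcomp Require Import all_boot all_order all_algebra.
From mathcomp Require Import all_classical all_reals all_analysis.
From mathcomp Require Import measurable_realfun.
Set Implicit Arguments. Unset Strict Implicit. Unset Printing Implicit Defensive.
Import Order.TTheory GRing.Theory Num.Theory.
Import numFieldNormedType.Exports.
Local Open Scope classical_set_scope.
Local Open Scope ring_scope.

Definition Borel (X : topologicalType) (A : set X) : Prop :=
  <<s @open X >> A.

Definition measurable_setmap (X : topologicalType) (G : X -> set X) : Prop :=
  forall V : set X, closed V -> Borel [set x | G x `&` V !=set0].

Definition borel_finite_cover (X : topologicalType) (Vs : set (set X)) : Prop :=
  finite_set Vs /\ (forall V, Vs V -> Borel V) /\ \bigcup_(V in Vs) V = setT.

Definition refines (X : Type) (Vs Us : set (set X)) : Prop :=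
  forall V, Vs V -> exists2 U, Us U & V `<=` U.

(* The term sup_{y in V ∩ G x} f y, omitted (i.e. 0) when V ∩ G x is empty. *)
Definition sup_term (R : realType) (X : Type) (f : X -> R) (GX V : set X)
  : \bar R :=
  if pselect (V `&` GX !=set0) is left _
  then ereal_sup [set (f y)%:E | y in V `&` GX] else 0%E.

Definition Fmap (R : realType) (X : topologicalType) (G : X -> set X)
  (f : X -> R) (Us : set (set X)) (x : X) : \bar R :=
  ereal_inf [set (\sum_(V \in Vs) sup_term f (G x) V)%E
            | Vs in [set Vs | borel_finite_cover Vs /\ refines Vs Us]].

From HB Require Import structures.
From mathcomp Require Import all_boot all_order all_algebra.
From mathcomp Require Import all_classical all_reals all_analysis.
From mathcomp Require Import measurable_realfun.
From mathcomp Require Import lra.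
Import Order.TTheory GRing.Theory Num.Theory.
Import numFieldNormedType.Exports.
Local Open Scope classical_set_scope.
Local Open Scope ring_scope.

(* F x < t iff x lies in one of countably many Borel sets, each coded by
   finite rational data: bounds q_i < 0 on pairwise distinct open sets W_i built
   from a countable base (with G x meeting W_i and f < q_i on W_i ∩ G x), and
   bounds q_j >= 0 on members U_j of the cover (with G x ∩ {f >= 0} covered by
   the U_j ∩ {f < q_j}), where Σ q < t. Such data give a Borel refinement with
   sum at most Σ q; conversely a cover with sum < t is coded by raising its
   terms to rationals and replacing each member with a negative term by a
   neighbourhood of finitely many witness and separating points, which keeps
   distinct members distinct. Each condition says whether G x hits an
   (open ∩ closed) set, which is Borel since open sets of a metric space are
   F_sigma. *)

Section Borel.
Context {T : topologicalType}.
Implicit Types A B : set T.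

Lemma Borel0 : Borel (@set0 T).
Proof. exact: sigma_algebra0. Qed.

Lemma BorelC A : Borel A -> Borel (~` A).
Proof. by move=> mA; rewrite -setTD; exact: sigma_algebraCD. Qed.

Lemma Borel_bigcup (I : countType) (D : set I) (E : I -> set T) :
  (forall i, D i -> Borel (E i)) -> Borel (\bigcup_(i in D) E i).
Proof.
move=> mE; pose E' n := if unpickle n is Some i then
  if pselect (D i) then E i else set0 else set0.
have -> : \bigcup_(i in D) E i = \bigcup_n E' n.
  apply/seteqP; split => [z [i Di Ez]|z [n _]].
    by exists (pickle i) => //; rewrite /E' pickleK; case: (pselect (D i)).
  by rewrite /E'; case: unpickle => // i; case: (pselect (D i)) => // Di Ez; exists i.
apply: sigma_algebra_bigcup => n; rewrite /E'; case: unpickle => [i|]; last exact: Borel0.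
by case: (pselect (D i)) => [Di|nDi] /=; [exact: mE|exact: Borel0].
Qed.

Lemma Borel_bigcap (I : countType) (D : set I) (E : I -> set T) :
  (forall i, D i -> Borel (E i)) -> Borel (\bigcap_(i in D) E i).
Proof.
move=> mE; rewrite -[X in Borel X]setCK setC_bigcap; apply: BorelC.
by apply: Borel_bigcup => i /mE; exact: BorelC.
Qed.

Lemma BorelI A B : Borel A -> Borel B -> Borel (A `&` B).
Proof.
move=> mA mB; rewrite -[A `&` B]setCK setCI -bigcup2E; apply: BorelC; apply: Borel_bigcup.
by move=> [|[|n]] _ /=; [exact: BorelC|exact: BorelC|exact: Borel0].
Qed.

Lemma Borel_open A : open A -> Borel A.
Proof. exact: sub_sigma_algebra. Qed.

Lemma Borel_closed A : closed A -> Borel A.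
Proof.
by move=> cA; rewrite -[A]setCK; apply: BorelC; apply: Borel_open; exact: closed_openC.
Qed.

Lemma Borel_sublevel (R : realType) (F : T -> \bar R) :
  (forall t : R, Borel [set x | (F x < t%:E)%E]) ->
  forall S : set (\bar R), measurable S -> Borel (F @^-1` S).
Proof.
move=> mF S; rewrite /measurable /= (@ErealGenInftyO.measurableE R).
have sF : sigma_algebra setT [set B : set (\bar R) | Borel (F @^-1` B)].
  split => [|S' mS'|S' mS'] /=.
  - by rewrite preimage_set0; exact: Borel0.
  - by rewrite setTD -preimage_setC; exact: BorelC.
  - by rewrite preimage_bigcup; apply: Borel_bigcup => n _; exact: mS'.
apply: smallest_sub sF _ S => _ [r ->] /=.
have -> : F @^-1` `]-oo, r%:E[ = [set x | (F x < r%:E)%E].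
  by apply/seteqP; split => z /=; rewrite in_itv.
exact: mF.
Qed.

End Borel.

Section RealSums.
Context {R : realType}.

Lemma rat_upper_approx (T : Type) (s : seq T) (a : T -> R) (t : R) :
  \sum_(v <- s) a v < t ->
  exists q : T -> rat, [/\ forall v, a v < ratr (q v),
    forall v, a v < 0 -> ratr (q v) < 0 :> R & \sum_(v <- s) ratr (q v) < t].
Proof.
move=> st; pose eta := (t - \sum_(v <- s) a v) / (size s).+1%:R.
have eta0 : 0 < eta by rewrite divr_gt0 // subr_gt0.
pose b v := if a v < 0 then Num.min (a v + eta) 0 else a v + eta.
have qex v : exists q : rat, ratr q \in `](a v), (b v)[.
  by apply: rat_in_itvoo; rewrite /b; case: ifP; rewrite ?lt_min ltrDl eta0.
pose q v := xchoose (qex v).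
have qP v : a v < ratr (q v) < b v by have := xchooseP (qex v); rewrite in_itv.
exists q; split => [v|v av0|]; first by case/andP: (qP v).
  by case/andP: (qP v) => _; rewrite /b av0 lt_min => /andP[].
apply: (@le_lt_trans _ _ (\sum_(v <- s) (a v + eta))).
  apply: ler_sum => v _; case/andP: (qP v) => _ /ltW /le_trans; apply.
  by rewrite /b; case: ifP => _; rewrite ?ge_min lexx.
rewrite big_split /= big_const_seq count_predT iter_addr_0 -mulr_natr.
have : eta * (size s)%:R + eta = t - \sum_(v <- s) a v.
  by rewrite -{2}(mulr1 eta) -mulrDr natr1 divfK // pnatr_eq0.
lra.
Qed.

Lemma ler_sum_undup (T : eqType) (s : seq T) (h : T -> R) :
  (forall v, 0 <= h v) -> \sum_(v <- undup s) h v <= \sum_(v <- s) h v.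
Proof.
move=> h0; elim: s => [|v s IH] /=; first by rewrite !big_nil.
by case: ifP => _; rewrite !big_cons ?lerD2l // (le_trans IH) // lerDr.
Qed.

Lemma fsbig_cat_le (T : choiceType) (g : T -> R) (b w : seq T) : uniq w ->
  \sum_(v \in [set` b ++ w]) g v <=
  \sum_(v <- w) g v + \sum_(v <- b) Num.max (g v) 0.
Proof.
move=> uw; have -> : [set` b ++ w] = [set` undup (b ++ w)].
  by apply/seteqP; split => v /=; rewrite mem_undup.
rewrite -fsbig_seq ?undup_uniq // undup_cat big_cat /= (undup_id uw) addrC lerD2l.
apply: (@le_trans _ _ (\sum_(v <- undup b) Num.max (g v) 0)).
  rewrite big_filter big_mkcond; apply: ler_sum => v _.
  by case: ifP; rewrite ?le_max lexx ?orbT.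
by apply: ler_sum_undup => v; rewrite le_max lexx orbT.
Qed.

End RealSums.

Lemma finite_witnesses (J T : eqType) (s : seq J) (C : J -> Prop) (P : J -> T -> Prop) :
  (forall j, j \in s -> C j -> exists p, P j p) ->
  exists Q : seq T, forall j, j \in s -> C j -> exists2 p, p \in Q & P j p.
Proof.
elim: s => [|j s IH] hs; first by exists [::].
have [Q HQ] : exists Q : seq T, forall k, k \in s -> C k -> exists2 p, p \in Q & P k p.
  by apply: IH => k ks; apply: hs; rewrite inE ks orbT.
have [[p Pp]|nP] := pselect (exists p, C j -> P j p).
  exists (p :: Q) => k; rewrite inE => /orP[/eqP-> Cj|ks Ck].
    by exists p; [exact: mem_head | exact: Pp].
  by have [p' p'Q Pp'] := HQ k ks Ck; exists p' => //; rewrite inE p'Q orbT.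
exists Q => k; rewrite inE => /orP[/eqP-> Cj|]; last exact: HQ.
have [p Pp] := hs j (mem_head _ _) Cj.
by exfalso; apply: nP; exists p.
Qed.

(* [compact_cover] is only available for pointed spaces. *)
Definition pointed_at {T : topologicalType} (x0 : T) : Type := T.
HB.instance Definition _ (T : topologicalType) (x0 : T) :=
  Topological.on (pointed_at x0).
HB.instance Definition _ (T : topologicalType) (x0 : T) :=
  isPointed.Build (pointed_at x0) x0.

Lemma continuous_bounded_above (R : realType) (T : topologicalType) (f : T -> R) :
  continuous f -> compact [set: T] -> exists M : R, forall z, f z <= M.
Proof.
move=> fc Tc; have cf : compact (f @` [set: T]).
  by apply: continuous_compact => //; exact: continuous_subspaceT.
have [M HM] := filter_ex (compact_bounded cf : \forall M \near +oo, _).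
by exists M => z; apply: le_trans (ler_norm _) _; apply: HM; exists z.
Qed.

Definition hits {T : Type} (G : T -> set T) (A : set T) : set T :=
  [set x | G x `&` A !=set0].

Section PseudoMetric.
Context {R : realType} {X : pseudoMetricType R}.

Lemma open_Fsigma (O : set X) : open O ->
  exists C : nat -> set X, (forall n, closed (C n)) /\ O = \bigcup_n C n.
Proof.
move=> oO; exists (fun n => closure [set y | ball y (2 * n.+1%:R^-1) `<=` O]).
split=> [n|]; first exact: closed_closure.
apply/seteqP; split=> [z Oz|z [n _ cz]].
  have /nbhs_ballP [e /= e0 sub] : nbhs z O by apply: open_nbhs_nbhs.
  have /filter_ex [n hn] := near_infty_natSinv_lt (PosNum (divr_gt0 e0 (@ltr0Sn R 1))).
  exists n => //; apply: subset_closure; apply: subset_trans sub; apply: le_ball.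
  by rewrite -ler_pdivlMl // mulrC ltW.
have d0 : 0 < n.+1%:R^-1 :> R by rewrite invr_gt0 ltr0Sn.
have [y [Oy bzy]] := cz (ball z n.+1%:R^-1) (nbhsx_ballx z _ d0).
apply: Oy; apply: le_ball (ball_sym bzy).
by rewrite ler_peMl // ?invr_ge0 // ler1n.
Qed.

Lemma hits_Borel (G : X -> set X) (O C : set X) : measurable_setmap G ->
  open O -> closed C -> Borel (hits G (O `&` C)).
Proof.
move=> mG oO cC; have [Cn [cCn ->]] := open_Fsigma _ oO.
have -> : hits G (\bigcup_n Cn n `&` C) = \bigcup_n hits G (Cn n `&` C).
  apply/seteqP; split=> x /=.
    by move=> [z [Gz [[n _ Cz] Cz']]]; exists n => //; exists z.
  by move=> [n _ [z [Gz [Cz Cz']]]]; exists z; split => //; split => //; exists n.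
by apply: Borel_bigcup => n _; apply: mG; exact: closedI.
Qed.

Lemma compact_finite_net (r : R) : compact [set: X] -> 0 < r ->
  exists s : seq X, forall z, exists2 c, c \in s & ball c r z.
Proof.
move=> Xc r0; have [[x0 _]|X0] := pselect (exists x : X, True); last first.
  by exists [::] => z; exfalso; apply: X0; exists z.
have Xcc : @cover_compact (pointed_at x0) [set: X] by rewrite -compact_cover.
have [D _ cov] : finite_subset_cover setT (fun c => interior (ball c r)) [set: X].
  apply: Xcc => [c _|z _]; first exact: open_interior.
  by exists z => //; exact: nbhsx_ballx.
exists (finmap.enum_fset D) => z; have [c cD cz] := cov z I.
by exists c => //; exact: interior_subset.
Qed.

Lemma compact_countable_base : compact [set: X] ->
  exists basic : nat * nat -> set X, (forall i, open (basic i)) /\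
    forall A z, open A -> A z -> exists i, basic i z /\ basic i `<=` A.
Proof.
move=> Xc; have [[x0 _]|X0] := pselect (exists x : X, True); last first.
  by exists (fun=> set0); split=> [i|A z]; [exact: open0|exfalso; apply: X0; exists z].
have r0 n : 0 < n.+1%:R^-1 / 2 :> R by rewrite divr_gt0 // invr_gt0 ltr0Sn.
have [net netP] := choice (fun n => @compact_finite_net _ Xc (r0 n)).
exists (fun i => interior (ball (nth x0 (net i.1) i.2) i.1.+1%:R^-1)).
split=> [i|A z oA Az]; first exact: open_interior.
have /nbhs_ballP [e /= e0 sub] : nbhs z A by apply: open_nbhs_nbhs.
have /filter_ex [n hn] := near_infty_natSinv_lt (PosNum (divr_gt0 e0 (@ltr0Sn R 1))).
have [c cn bcz] := netP n z; exists (n, index c (net n)); rewrite /= nth_index //.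
have d0 : 0 < n.+1%:R^-1 :> R by rewrite invr_gt0 ltr0Sn.
move: (n.+1%:R^-1) d0 hn bcz => d d0 /= hd bcz; split.
  apply/nbhs_ballP; exists (d / 2); first by rewrite /= divr_gt0.
  by move=> w /(ball_triangle bcz); rewrite -splitr.
move=> w /interior_subset bcw; apply: sub.
have := ball_triangle (ball_sym bcz) bcw; apply: le_ball; lra.
Qed.

End PseudoMetric.

Section CountableBase.
Context {X : topologicalType} {I : countType} (basic : I -> set X).
Hypothesis basic_open : forall i, open (basic i).
Hypothesis basic_base :
  forall A z, open A -> A z -> exists i, basic i z /\ basic i `<=` A.

Definition basic_union (ws : seq I) : set X := \bigcup_(i in [set` ws]) basic i.

Lemma open_basic_union ws : open (basic_union ws).
Proof. by apply: bigcup_open => i _; exact: basic_open. Qed.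

Lemma isolating_basic_nbhs (Q : seq X) (N : X -> set X) : hausdorff_space X ->
  (forall p, open (N p) /\ N p p) ->
  exists b : X -> I, forall p, [/\ basic (b p) p, basic (b p) `<=` N p &
    forall p', p' \in Q -> basic (b p) p' -> p' = p].
Proof.
move=> Xhaus oN; suff /choice [b bP] : forall p, exists i, [/\ basic i p,
  basic i `<=` N p & forall p', p' \in Q -> basic i p' -> p' = p] by exists b.
move=> p; have [oNp Npp] := oN p.
have cQ : closed ([set` Q] `\` [set p]).
  by apply: compact_closed => //; apply/finite_compact/finite_setD/finite_seq.
have Ap : (N p `&` ~` ([set` Q] `\` [set p])) p by split => // -[_]; apply.
have [i [bip sub]] := basic_base _ _ (openI oNp (closed_openC cQ)) Ap.
exists i; split => // [z /sub []//|p' p'Q /sub [_]].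
by apply: contra_notP => pp'; split.
Qed.

Lemma distinct_basic_approx (K : set X) (vs : seq (set X)) (A : set X -> set X) :
  hausdorff_space X ->
  (forall V, V \in vs -> [/\ open (A V), V `<=` A V & V `&` K !=set0]) ->
  exists ws : set X -> seq I,
    [/\ forall V, V \in vs -> basic_union (ws V) `<=` A V,
        forall V, V \in vs -> basic_union (ws V) `&` K !=set0 &
        {in vs &, injective (basic_union \o ws)}].
Proof.
move=> Xhaus hA.
have [Q1 Q1P] : exists Q1 : seq X,
    forall V, V \in vs -> True -> exists2 p, p \in Q1 & V p /\ K p.
  by apply: finite_witnesses => V /hA [].
have [Q2 Q2P] : exists Q2 : seq X, forall VV, VV \in [seq (V, V') | V <- vs, V' <- vs] ->
    ~ VV.1 `<=` VV.2 -> exists2 p, p \in Q2 & VV.1 p /\ ~ VV.2 p.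
  apply: finite_witnesses => VV _ /existsNP [p /not_implyP]; by exists p.
pose Q := Q1 ++ Q2.
pose N p := \bigcap_(V in [set V | V \in vs /\ V p]) A V.
have oN p : open (N p) /\ N p p.
  split; last by move=> V [/hA [_ sub _] Vp]; exact: sub.
  rewrite /N -[X in open X]setCK setC_bigcap; apply: closed_openC.
  apply: closed_bigcup => [|V [/hA [oAV _ _] _]]; last exact: open_closedC.
  by apply: sub_finite_set (finite_seq vs) => V [].
have [b bP] := isolating_basic_nbhs Q N Xhaus oN.
pose ws V := [seq b p | p <- Q & `[< V p >]].
have wsP V z : basic_union (ws V) z <-> exists2 p, p \in Q /\ V p & basic (b p) z.
  split => [[_ /mapP [p] + ->]|[p [pQ Vp] bz]].
    by rewrite mem_filter => /andP [/asboolP Vp pQ] bz; exists p.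
  by exists (b p) => //; apply: map_f; rewrite mem_filter pQ andbT; exact/asboolP.
exists ws; split => [V Vvs z /wsP [p [_ Vp] bz]|V Vvs|].
- by have [_ sub _] := bP p; exact: sub z bz V (conj Vvs Vp).
- have [p pQ1 [Vp Kp]] := Q1P V Vvs Logic.I; exists p; split => //; apply/wsP.
  by exists p; [rewrite mem_cat pQ1|case: (bP p)].
have sep V V' : V \in vs -> V' \in vs -> ~ V `<=` V' ->
    basic_union (ws V) <> basic_union (ws V').
  move=> Vvs V'vs nsub eqW.
  have [p pQ2 [Vp nV'p]] := Q2P (V, V') (allpairs_f pair Vvs V'vs) nsub.
  have pQ : p \in Q by rewrite mem_cat pQ2 orbT.
  have /wsP [p' [p'Q V'p'] bp'p] : basic_union (ws V') p.
    by rewrite -eqW; apply/wsP; exists p => //; case: (bP p).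
  by have [_ _ /(_ p pQ bp'p) pp'] := bP p'; apply: nV'p; rewrite pp'.
move=> V V' Vvs V'vs /= eqW; apply/seteqP; split; apply: contrapT => nsub.
  exact: sep Vvs V'vs nsub eqW.
exact: sep V'vs Vvs nsub (esym eqW).
Qed.

End CountableBase.

Section SublevelSets.
Variables (R : realType) (X : pseudoMetricType R) (I : countType).
Variable basic : I -> set X.
Hypothesis basic_open : forall i, open (basic i).
Hypothesis basic_base :
  forall A z, open A -> A z -> exists i, basic i z /\ basic i `<=` A.
Hypothesis Xhaus : hausdorff_space X.
Variable G : X -> set X.
Hypotheses (Gclosed : forall x, closed (G x)) (Gmeas : measurable_setmap G).
Variables (f : X -> R) (M : R).
Hypotheses (fcont : continuous f) (fM : forall z, f z <= M).
Variable us : seq (set X).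
Hypotheses (us_open : forall U, U \in us -> open U)
  (us_cover : forall z, exists2 U, U \in us & U z).

Local Notation W := (basic_union basic).
Local Notation ratR := (@ratr R).

Lemma closed_f_ge c : closed [set z | c <= f z].
Proof.
rewrite (_ : [set z | c <= f z] = f @^-1` [set y | c <= y]) //.
by move/continuous_closedP : fcont; apply; exact: closed_ge.
Qed.

Lemma open_f_lt c : open [set z | f z < c].
Proof.
rewrite (_ : [set z | f z < c] = f @^-1` [set y | y < c]) //.
by apply: open_comp; [move=> z _; exact: fcont|exact: open_lt].
Qed.

Definition supf (V : set X) (x : X) : R := fine (sup_term f (G x) V).

Lemma sup_termE V x : sup_term f (G x) V = (supf V x)%:E.
Proof.
rewrite /supf fineK // /sup_term; case: pselect => // -[y [Vy Gy]].
rewrite fin_numElt (@lt_le_trans _ _ (f y)%:E) ?ltNyr //=.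
  by apply: le_lt_trans (ltry M); apply: ge_ereal_sup => _ [z _ <-]; rewrite lee_fin.
by apply: ereal_sup_ubound; exists y.
Qed.

Lemma supf_ge V x y : V y -> G x y -> f y <= supf V x.
Proof.
move=> Vy Gy; rewrite -lee_fin -sup_termE /sup_term.
case: pselect => [_|/(_ (ex_intro _ y (conj Vy Gy)))//].
by apply: ereal_sup_ubound; exists y.
Qed.

Lemma supf_le V x c : (forall y, V y -> G x y -> f y <= c) ->
  (V `&` G x = set0 -> 0 <= c) -> supf V x <= c.
Proof.
move=> Vc V0; rewrite -lee_fin -sup_termE /sup_term; case: pselect => [_|VG0].
  by apply: ge_ereal_sup => _ [z [Vz Gz] <-]; rewrite lee_fin; exact: Vc.
by rewrite lee_fin; apply: V0; apply/seteqP; split => // z Vz; apply: VG0; exists z.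
Qed.

Lemma supf_lt0_meet V x : supf V x < 0 -> V `&` G x !=set0.
Proof.
by rewrite /supf /sup_term; case: pselect => // _; rewrite ltxx.
Qed.

Definition data := (seq (seq I * rat) * seq (nat * rat))%type.

Definition pos_cover (l : seq (nat * rat)) : set X :=
  \bigcup_(e in [set` l]) (nth set0 us e.1 `&` [set z | f z < ratR e.2]).

Lemma open_pos_cover l : open (pos_cover l).
Proof.
apply: bigcup_open => e _; apply: openI (open_f_lt _).
have [lt_e|le_e] := ltnP e.1 (size us); first exact/us_open/mem_nth.
by rewrite nth_default //; exact: open0.
Qed.

(* Distinctness of the W's matters: [Fmap] sums over a set of sets, so equal
   members would be counted once and their negative bounds lost. *)
Definition admissible (t : R) (d : data) : Prop :=
  [/\ forall e, e \in d.1 -> ratR e.2 < 0 /\ exists2 U, U \in us & W e.1 `<=` U,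
      uniq [seq W e.1 | e <- d.1],
      forall e, e \in d.2 -> (e.1 < size us)%N /\ 0 <= ratR e.2
    & \sum_(e <- d.1) ratR e.2 + \sum_(e <- d.2) ratR e.2 < t].

Definition realized (d : data) (x : X) : Prop :=
  (forall e, e \in d.1 ->
     hits G (W e.1) x /\ ~ hits G (W e.1 `&` [set z | ratR e.2 <= f z]) x) /\
  ~ hits G ([set z | 0 <= f z] `&` ~` pos_cover d.2) x.

Definition sublevel_piece (t : R) (d : data) : set X :=
  [set x | admissible t d /\ realized d x].

Lemma sublevel_piece_Borel t d : Borel (sublevel_piece t d).
Proof.
have [adm|nadm] := pselect (admissible t d); last first.
  rewrite (_ : sublevel_piece t d = set0); first exact: Borel0.
  by apply/seteqP; split => // x [].
have -> : sublevel_piece t d =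
    \bigcap_(e in [set` d.1]) (hits G (W e.1) `&`
      ~` hits G (W e.1 `&` [set z | ratR e.2 <= f z])) `&`
    ~` hits G ([set z | 0 <= f z] `&` ~` pos_cover d.2).
  apply/seteqP; split => [x [_ [neg pos]]|x [neg pos]].
    by split => // e /neg [].
  by split => //; split => // e /neg [].
apply: BorelI; first apply: Borel_bigcap => e _.
  apply: BorelI; last apply: BorelC; last first.
    by apply: hits_Borel => //; [exact: open_basic_union|exact: closed_f_ge].
  by rewrite -[W e.1]setIT; apply: hits_Borel => //; exact: open_basic_union.
rewrite -[_ `&` _]setTI; apply: BorelC; apply: hits_Borel => //; first exact: openT.
by apply: closedI; [exact: closed_f_ge|exact/open_closedC/open_pos_cover].
Qed.

(* The members [U `\` (G x `&` [set z | 0 <= f z])] have nonpositive terms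
   and complete the cover. *)
Definition piece_cover (d : data) (x : X) : seq (set X) :=
  ([seq G x `&` nth set0 us e.1 `&` [set z | f z < ratR e.2] | e <- d.2]
   ++ [seq U `\` (G x `&` [set z | 0 <= f z]) | U <- us])
  ++ [seq W e.1 | e <- d.1].

Lemma piece_coverP d x V : V \in piece_cover d x ->
  [\/ exists2 e, e \in d.2 & V = G x `&` nth set0 us e.1 `&` [set z | f z < ratR e.2],
      exists2 U, U \in us & V = U `\` (G x `&` [set z | 0 <= f z])
    | exists2 e, e \in d.1 & V = W e.1].
Proof.
by rewrite !mem_cat => /orP[/orP[]|] /mapP [a ad ->];
  [apply: Or31|apply: Or32|apply: Or33]; exists a.
Qed.

Lemma piece_cover_refines t d x : admissible t d -> realized d x ->
  borel_finite_cover [set` piece_cover d x] /\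
  refines [set` piece_cover d x] [set` us].
Proof.
move=> [negD _ posD _] [_ pos]; split; [split; [exact: finite_seq|split]|].
- move=> V /piece_coverP [[e /posD [lt_e _] ->]|[U /us_open oU ->]|[e _ ->]].
  + apply: BorelI; last by apply: Borel_open; exact: open_f_lt.
    apply: BorelI; first exact: Borel_closed.
    by apply: Borel_open; apply: us_open; exact: mem_nth lt_e.
  + rewrite setDE; apply: BorelI; first exact: Borel_open.
    apply: BorelC; apply: Borel_closed.
    by apply: closedI; [exact: Gclosed|exact: closed_f_ge].
  + by apply: Borel_open; exact: open_basic_union.
- apply/seteqP; split => // z _; have [[Gz fz]|nGz] := pselect (G x z /\ 0 <= f z).
    have [e ed [Uz fze]] : pos_cover d.2 z.
      by apply: contrapT => nP; apply: pos; exists z.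
    exists (G x `&` nth set0 us e.1 `&` [set z | f z < ratR e.2]) => //.
    by rewrite /= !mem_cat; apply/orP; left; apply/orP; left; exact: map_f.
  have [U Uus Uz] := us_cover z; exists (U `\` (G x `&` [set z | 0 <= f z])) => //.
  by rewrite /= !mem_cat; apply/orP; left; apply/orP; right; exact: map_f.
- move=> V /piece_coverP [[e /posD [lt_e _] ->]|[U Uus ->]|[e /negD [_ WU] ->]] //.
  + by exists (nth set0 us e.1); [exact: mem_nth|move=> z [[]]].
  + by exists U => // z [].
Qed.

Lemma piece_cover_sum t d x : admissible t d -> realized d x ->
  \sum_(V \in [set` piece_cover d x]) supf V x <=
  \sum_(e <- d.1) ratR e.2 + \sum_(e <- d.2) ratR e.2.
Proof.
move=> [_ uW posD _] [neg _]; rewrite /piece_cover.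
apply: le_trans (fsbig_cat_le _ (supf^~ x) _ _ uW) _.
apply: lerD.
  rewrite big_map !big_seq; apply: ler_sum => e ed; have [[y [Gy Wy]] nhit] := neg e ed.
  apply: supf_le => [z Wz Gz|W0]; last by move: W0 => /seteqP [/(_ y (conj Wy Gy))].
  by rewrite leNgt; apply/negP => lt; apply: nhit; exists z; do 2?split => //; exact: ltW.
rewrite big_cat /= -[X in _ <= X]addr0; apply: lerD.
  rewrite big_map !big_seq; apply: ler_sum => e ed; have [_ q0] := posD e ed.
  by rewrite ge_max q0 andbT; apply: supf_le => // z [[_ _] /ltW].
rewrite big_map big1 // => U _; apply/max_idPr; apply: supf_le => // z [_ nGz] Gz.
by rewrite leNgt; apply/negP => /ltW fz; apply: nGz.
Qed.

Lemma Fmap_lt_of_piece t d x : sublevel_piece t d x -> (Fmap G f [set` us] x < t%:E)%E.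
Proof.
move=> [adm real]; have [cov ref] := piece_cover_refines _ _ _ adm real.
apply: (@le_lt_trans _ _ (\sum_(V \in [set` piece_cover d x]) sup_term f (G x) V)%E).
  by apply: ereal_inf_lbound; exists [set` piece_cover d x].
under eq_fsbigr do rewrite sup_termE.
rewrite fsumEFin ?lte_fin; last exact: finite_seq.
by apply: le_lt_trans (piece_cover_sum _ _ _ adm real) _; case: adm.
Qed.

Lemma Fmap_lt_cover t x : (Fmap G f [set` us] x < t%:E)%E ->
  exists vs : seq (set X), [/\ uniq vs, forall z, exists2 V, V \in vs & V z,
    forall V, V \in vs -> exists2 U, U \in us & V `<=` U
    & \sum_(V <- vs) supf V x < t].
Proof.
move=> /ereal_inf_lt [_ [Vs [[Vsfin [_ Vscov]] Vsref] <-]].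
have [s Vse] := (finite_seqP Vs).1 Vsfin.
have {Vse} Vse : Vs = [set` undup s].
  by rewrite Vse; apply/seteqP; split => V /=; rewrite mem_undup.
rewrite Vse -fsbig_seq ?undup_uniq //.
under eq_bigr do rewrite sup_termE; rewrite sumEFin lte_fin => sumlt.
exists (undup s); split => [|z|V Vs_V|//]; first exact: undup_uniq.
  have [V] : (\bigcup_(V in Vs) V) z by rewrite Vscov.
  by rewrite Vse => /= Vs_V Vz; exists V.
have /Vsref [U] : Vs V by rewrite Vse.
by exists U.
Qed.

Section CoverData.
Variables (t : R) (x : X) (vs : seq (set X)).
Variables (q : set X -> rat) (Uof : set X -> set X) (ws : set X -> seq I).
Hypotheses (vs_uniq : uniq vs) (vs_cover : forall z, exists2 V, V \in vs & V z)
  (UofP : forall V, V \in vs -> Uof V \in us /\ V `<=` Uof V)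
  (supf_q : forall V, supf V x < ratR (q V))
  (q_neg : forall V, supf V x < 0 -> ratR (q V) < 0)
  (sum_q : \sum_(V <- vs) ratR (q V) < t).
Local Notation negvs := [seq V <- vs | supf V x < 0].
Hypotheses (ws_sub : forall V, V \in negvs ->
    W (ws V) `<=` Uof V `&` ([set z | f z < ratR (q V)] `|` ~` G x))
  (ws_meet : forall V, V \in negvs -> W (ws V) `&` G x !=set0)
  (ws_inj : {in negvs &, injective (W \o ws)}).

Definition cover_data : data :=
  ([seq (ws V, q V) | V <- negvs],
   [seq (index (Uof V) us, q V) | V <- vs & 0 <= supf V x]).

Lemma cover_data_admissible : admissible t cover_data.
Proof.
split => [e /mapP [V Vn ->] /=|||].
- have := Vn; rewrite mem_filter => /andP [/q_neg q0 Vvs]; split => //.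
  by exists (Uof V); [exact: (UofP V Vvs).1|move=> z /(ws_sub _ Vn) []].
- have -> : [seq W e.1 | e <- cover_data.1] = map (W \o ws) negvs by rewrite -map_comp.
  by rewrite (map_inj_in_uniq ws_inj) filter_uniq.
- move=> e /mapP [V]; rewrite mem_filter => /andP [nn Vvs] -> /=.
  by rewrite index_mem (UofP V Vvs).1 (le_trans nn (ltW (supf_q V))).
rewrite /= !big_map !big_filter -(eq_bigl _ _ (fun V => esym (leNgt 0 (supf V x)))).
by have := sum_q; rewrite (bigID (fun V => supf V x < 0)).
Qed.

Lemma cover_data_realized : realized cover_data x.
Proof.
split => [e /mapP [V Vn ->] /=|[z [Gz [/= fz nP]]]].
  split; first by have [z [Wz Gz]] := ws_meet _ Vn; exists z.
  move=> [z [Gz [Wz /= qz]]]; have [_ [/= fz|//]] := ws_sub _ Vn _ Wz.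
  by rewrite leNgt fz in qz.
apply: nP; have [V Vvs Vz] := vs_cover z; have fV := supf_ge _ _ _ Vz Gz.
exists (index (Uof V) us, q V).
  by apply: map_f; rewrite mem_filter Vvs (le_trans fz fV).
rewrite /= nth_index; last exact: (UofP V Vvs).1.
by split; [exact: (UofP V Vvs).2|exact: le_lt_trans fV (supf_q V)].
Qed.

End CoverData.

Lemma sublevel_piece_of_Fmap_lt t x :
  (Fmap G f [set` us] x < t%:E)%E -> exists d, sublevel_piece t d x.
Proof.
move=> /Fmap_lt_cover [vs [vs_uniq vs_cover vs_ref sumlt]].
have [q [supf_q q_neg sum_q]] := rat_upper_approx _ _ _ _ sumlt.
have [Uof UofP] : exists Uof : set X -> set X,
    forall V, V \in vs -> Uof V \in us /\ V `<=` Uof V.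
  suff /choice [Uof ?] : forall V, exists U, V \in vs -> U \in us /\ V `<=` U.
    by exists Uof.
  move=> V; have [/vs_ref [U Uus VU]|Vvs] := boolP (V \in vs); first by exists U.
  by exists set0 => /negP.
pose A V := Uof V `&` ([set z | f z < ratR (q V)] `|` ~` G x).
have [V|ws [ws_sub ws_meet ws_inj]] :=
  distinct_basic_approx basic basic_base (G x) [seq V <- vs | supf V x < 0] A Xhaus.
  rewrite mem_filter => /andP [neg Vvs]; split.
  - apply: openI; first exact: us_open (UofP V Vvs).1.
    by apply: openU; [exact: open_f_lt|exact: closed_openC].
  - move=> z Vz; split; first exact: (UofP V Vvs).2.
    have [Gz|] := pselect (G x z); [left|by right].
    exact: le_lt_trans (supf_ge _ _ _ Vz Gz) (supf_q V).
  - exact: supf_lt0_meet.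
by exists (cover_data x vs q Uof ws); split;
  [apply: cover_data_admissible|apply: cover_data_realized].
Qed.

Lemma sublevel_Borel t : Borel [set x | (Fmap G f [set` us] x < t%:E)%E].
Proof.
have -> : [set x | (Fmap G f [set` us] x < t%:E)%E] =
    \bigcup_(d in setT) sublevel_piece t d.
  apply/seteqP; split => [x /sublevel_piece_of_Fmap_lt [d ?]|x [d _]].
    by exists d.
  exact: Fmap_lt_of_piece.
by apply: Borel_bigcup => d _; exact: sublevel_piece_Borel.
Qed.

End SublevelSets.

Theorem lemma4p1 (R : realType) (X : pseudoMetricType R)
  (Xhaus : hausdorff_space X) (Xcompact : compact [set: X])
  (G : X -> set X)
  (Gne : forall x, G x !=set0) (Gclosed : forall x, closed (G x))
  (Gmeas : measurable_setmap G)
  (f : X -> R) (fcont : continuous f)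
  (Us : set (set X)) (Usfin : finite_set Us) (Usopen : forall U, Us U -> open U)
  (Uscover : \bigcup_(U in Us) U = setT) :
  forall B : set (\bar R), measurable B -> Borel (Fmap G f Us @^-1` B).
Proof.
have [basic [basic_open basic_base]] := compact_countable_base Xcompact.
have [M fM] := continuous_bounded_above _ _ _ fcont Xcompact.
have [us usE] := (finite_seqP Us).1 Usfin; subst Us.
apply: Borel_sublevel => t.
apply: (sublevel_Borel _ _ _ _ basic_open basic_base Xhaus _ Gclosed Gmeas _ _ fcont fM).
  by move=> U; exact: Usopen.
move=> z; have [U] : (\bigcup_(U in [set` us]) U) z by rewrite Uscover.
by exists U.
Qed.
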